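(* Let $\pi(m)=(1/2)^m$ for $m\in\mathbb{N}^+$ (and $\pi(m)=0$ otherwise), and let the proposal be $q(m,\{m+1\})=\theta=1-q(m,\{m-1\})$ for $m\in\mathbb{Z}$, with $\theta\in(0,1)$. Take $N=1$ and weights $W_{m,1}=(b-\varepsilon_m)\,\mathrm{Ber}(s_m)+\varepsilon_m$, where $b>1$, $\varepsilon_m=m^{-(3-(m \bmod 3))}$, $\mathrm{Ber}(s_m)$ is a Bernoulli random variable with parameter $s_m$, and $s_m=\frac{1-\varepsilon_m}{b-\varepsilon_m}$ so that $\mathbb{E}[W_{m,1}]=1$. Then for any $\theta\in(0,1)$ there exists $b>1$ such that the Markov chain generated by the noisy kernel $\tilde P_1$ is transient.
   Context: Noisy Metropolis–Hastings kernel $\tilde P_N$: from state $m$, propose $Y\sim q(m,\cdot)$, draw independent weights $W\sim Q_{m,N}$, $U\sim Q_{Y,N}$ (the laws of $W_{m,N}$, $W_{Y,N}$), and move to $Y$ with probability $\min\{1,\frac{\pi(Y)q(Y,m)}{\pi(m)q(m,Y)}\cdot\frac{U}{W}\}$, otherwise stay at $m$ (proposals outside $\mathbb{N}^+$ have $\pi(Y)=0$ and are rejected). *)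

From Stdlib Require Import Reals List Arith.
From Coquelicot Require Import Coquelicot.
Import ListNotations.
Open Scope R_scope.

(* States of the chain are natural numbers; the state space is N^+ = {m >= 1}.
   The value 0 stands for the (only reachable) proposal outside N^+. *)

Definition pi_t (m : nat) : R := if (1 <=? m)%nat then (1/2) ^ m else 0.

Definition q_prop (theta : R) (m y : nat) : R :=
  if Nat.eqb y (S m) then theta
  else if Nat.eqb (S y) m then 1 - theta
  else 0.

Definition eps (m : nat) : R := / (INR m ^ (3 - m mod 3)).

Definition s_par (b : R) (m : nat) : R := (1 - eps m) / (b - eps m).

(* Law Q_{m,1} of W_{m,1} = (b - eps_m) Ber(s_m) + eps_m, as a finite list of
   (probability, value) pairs: value b with prob. s_m, value eps_m with
   prob. 1 - s_m. *)
Definition W_law (b : R) (m : nat) : list (R * R) :=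
  [(s_par b m, b); (1 - s_par b m, eps m)].

(* Noisy acceptance probability for the move x -> y:
   E[ min{1, pi(y)q(y,x)/(pi(x)q(x,y)) * U/W} ],  W ~ Q_x, U ~ Q_y independent. *)
Definition noisy_acc (theta b : R) (x y : nat) : R :=
  fold_right Rplus 0
    (map (fun pw : R * R =>
       fold_right Rplus 0
         (map (fun pu : R * R =>
            fst pw * fst pu *
            Rmin 1 ((pi_t y * q_prop theta y x) / (pi_t x * q_prop theta x y)
                    * (snd pu / snd pw)))
          (W_law b y)))
     (W_law b x)).

(* Proposals to 0 have pi = 0 and hence acceptance probability 0.
   State 0 (never visited from N^+) is made absorbing for totality. *)
Definition Pnoisy (theta b : R) (x y : nat) : R :=
  if Nat.eqb x 0 then (if Nat.eqb y 0 then 1 else 0)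
  else if Nat.eqb y (S x) then theta * noisy_acc theta b x (S x)
  else if Nat.eqb (S y) x then (1 - theta) * noisy_acc theta b x y
  else if Nat.eqb y x then
    1 - theta * noisy_acc theta b x (S x)
      - (1 - theta) * noisy_acc theta b x (pred x)
  else 0.

(* hit P m n x = P_x(the chain visits m at some time t with 1 <= t <= n). *)
Fixpoint hit (P : nat -> nat -> R) (m : nat) (n : nat) (x : nat) : R :=
  match n with
  | O => 0
  | S n' => Series (fun z => P x z * (if Nat.eqb z m then 1 else hit P m n' z))
  end.

Definition return_prob (P : nat -> nat -> R) (m : nat) : Rbar :=
  Lim_seq (fun n => hit P m n m).

Definition transient_state (P : nat -> nat -> R) (m : nat) : Prop :=
  Rbar_lt (return_prob P m) (Finite 1).

Definition transient_chain (P : nat -> nat -> R) : Prop :=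
  forall m : nat, (1 <= m)%nat -> transient_state P m.

(* Since [eps] runs through
   m^-3, m^-2, m^-1 along residues mod 3, for large [x] the weight ratio [U/W] is about [x]
   for an up-move from [x = 0, 1 (mod 3)] and about [1/x] for a down-move from
   [x = 1, 2 (mod 3)]; as [W = eps x] with probability at least 1/2, such up-moves are
   accepted with probability >= 1/2, while such down-moves need a weight equal to [b],
   which has probability <= 2/b. Over each period of three states the product of the ratios
   down/up is therefore at most [144 ((1-theta)/theta)^3 / b < 1] for [b] large, so the
   tail sums of these products form a nonnegative superharmonic function that strictly
   decreases at every state; it bounds the return probability to any state away from 1. *)

From Stdlib Require Import Reals Lia Lra.
From Coquelicot Require Import Coquelicot.
Open Scope R_scope.

Definition point_mass (y : nat) (c : R) (z : nat) : R := if Nat.eqb z y then c else 0.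

Definition bd_row (a d : R) (x z : nat) : R :=
  point_mass (pred x) d z + point_mass x (1 - a - d) z + point_mass (S x) a z.

Lemma sum_n_point_mass y c n : sum_n (point_mass y c) n = if (n <? y)%nat then 0 else c.
Proof.
  induction n as [|n IH].
  - rewrite sum_O; unfold point_mass.
    destruct (Nat.eqb_spec 0 y), (Nat.ltb_spec 0 y); lia || reflexivity.
  - rewrite sum_Sn, IH; unfold point_mass.
    destruct (Nat.eqb_spec (S n) y), (Nat.ltb_spec n y), (Nat.ltb_spec (S n) y);
      try lia; unfold plus; simpl; ring.
Qed.

Lemma is_series_point_mass y c : is_series (point_mass y c) c.
Proof.
  change (is_lim_seq (sum_n (point_mass y c)) c).
  apply (is_lim_seq_ext_loc (fun _ => c)); [| apply is_lim_seq_const].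
  exists y; intros n Hn; rewrite sum_n_point_mass.
  destruct (Nat.ltb_spec n y); [lia | reflexivity].
Qed.

Lemma Series_bd_row a d x (h : nat -> R) :
  Series (fun z => bd_row a d x z * h z) = d * h (pred x) + (1 - a - d) * h x + a * h (S x).
Proof.
  apply is_series_unique.
  assert (Hrow : forall z, point_mass (pred x) (d * h (pred x)) z
    + point_mass x ((1 - a - d) * h x) z + point_mass (S x) (a * h (S x)) z
    = bd_row a d x z * h z).
  { intro z; unfold bd_row, point_mass.
    destruct (Nat.eqb_spec z (pred x)), (Nat.eqb_spec z x), (Nat.eqb_spec z (S x));
      subst; try lia; try ring.
    match goal with E : pred ?y = ?y |- _ => rewrite E; ring end. }
  apply (is_series_ext _ _ _ Hrow).
  exact (is_series_plus _ _ _ _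
    (is_series_plus _ _ _ _ (is_series_point_mass _ _) (is_series_point_mass _ _))
    (is_series_point_mass _ _)).
Qed.

Lemma mod3_S x : (S x mod 3 = S (x mod 3) mod 3)%nat.
Proof.
  replace (S x) with (x + 1)%nat by lia; replace (S (x mod 3)) with (x mod 3 + 1)%nat by lia.
  symmetry; apply Nat.Div0.add_mod_idemp_l.
Qed.

Section PeriodicTail.

Variables (g gp : nat -> R) (K : nat).
Hypothesis g_pos : forall k, (1 <= k)%nat -> 0 < g k.
Hypothesis gp_pos : forall r, 0 < gp r.
Hypothesis g_periodic : forall k, (K <= k)%nat -> g k = gp (k mod 3).
Hypothesis gp_period_lt1 : gp 0%nat * gp 1%nat * gp 2%nat < 1.

Fixpoint gprod (n : nat) : R :=
  match n with O => 1 | S k => g (S k) * gprod k end.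

(* From [K] on, [gprod] gains the factor [gp 0 * gp 1 * gp 2 < 1] every three steps, so the
   geometric series [sum_(k >= x) gprod k] equals [gprod x * tail_factor (x mod 3)];
   [tail x] is that series for every [x]. *)
Definition tail_factor (r : nat) : R :=
  (1 + gp (S r mod 3) + gp (S r mod 3) * gp (S (S r) mod 3))
  / (1 - gp 0%nat * gp 1%nat * gp 2%nat).

Fixpoint tail_from (n x : nat) : R :=
  match n with
  | O => gprod x * tail_factor (x mod 3)
  | S n' => gprod x + tail_from n' (S x)
  end.

Definition tail (x : nat) : R := tail_from (K - x) x.

Lemma gprod_pos n : 0 < gprod n.
Proof.
  induction n as [|n IH]; simpl; [lra|].
  apply Rmult_lt_0_compat; [apply g_pos; lia | exact IH].
Qed.

Lemma tail_factor_pos r : 0 < tail_factor r.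
Proof.
  unfold tail_factor.
  pose proof (gp_pos (S r mod 3)); pose proof (gp_pos (S (S r) mod 3)).
  apply Rdiv_lt_0_compat; nra.
Qed.

Lemma tail_factor_step r : (r < 3)%nat ->
  tail_factor r = 1 + gp (S r mod 3) * tail_factor (S r mod 3).
Proof.
  intro Hr; unfold tail_factor.
  destruct r as [|[|[|r]]]; try lia; simpl; field; lra.
Qed.

Lemma tail_pos x : 0 < tail x.
Proof.
  unfold tail; generalize (K - x)%nat; intro n; revert x.
  induction n as [|n IH]; intro x; simpl.
  - apply Rmult_lt_0_compat; [apply gprod_pos | apply tail_factor_pos].
  - pose proof (gprod_pos x); pose proof (IH (S x)); lra.
Qed.

Lemma tail_step x : tail x = gprod x + tail (S x).
Proof.
  unfold tail; destruct (Nat.ltb_spec x K).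
  - replace (K - x)%nat with (S (K - S x)) by lia; reflexivity.
  - replace (K - x)%nat with 0%nat by lia; replace (K - S x)%nat with 0%nat by lia.
    cbn [tail_from gprod].
    rewrite g_periodic by lia.
    rewrite (tail_factor_step (x mod 3)) by (apply Nat.mod_upper_bound; lia).
    rewrite <- mod3_S; ring.
Qed.

End PeriodicTail.

Section BirthDeath.

Variables (P : nat -> nat -> R) (up down : nat -> R).
Hypothesis P_bd_row : forall x z, P x z = bd_row (up x) (down x) x z.
Hypothesis up_ge0 : forall x, 0 <= up x.
Hypothesis down_ge0 : forall x, 0 <= down x.
Hypothesis up_down_le1 : forall x, up x + down x <= 1.

Definition reach (m n z : nat) : R := if Nat.eqb z m then 1 else hit P m n z.

Lemma hit_succ m n x :
  hit P m (S n) x =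
  down x * reach m n (pred x) + (1 - up x - down x) * reach m n x + up x * reach m n (S x).
Proof.
  simpl; rewrite <- Series_bd_row; apply Series_ext; intro z.
  rewrite P_bd_row; reflexivity.
Qed.

Lemma hit_bounds m n x : 0 <= hit P m n x <= 1.
Proof.
  revert x; induction n as [|n IH]; intro x; [simpl; lra|].
  assert (Hreach : forall z, 0 <= reach m n z <= 1).
  { intro z; unfold reach; destruct (Nat.eqb z m); [lra | apply IH]. }
  rewrite hit_succ.
  pose proof (Hreach (pred x)); pose proof (Hreach x); pose proof (Hreach (S x)).
  pose proof (up_ge0 x); pose proof (down_ge0 x); pose proof (up_down_le1 x).
  nra.
Qed.

Section Lyapunov.

Variables (m : nat) (f : nat -> R).
Hypothesis f_ge0 : forall x, 0 <= f x.
Hypothesis f_m_pos : 0 < f m.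
Hypothesis f_superharmonic : forall x, (m < x)%nat ->
  down x * f (pred x) + (1 - up x - down x) * f x + up x * f (S x) <= f x.

Lemma hit_le_lyapunov n x : (m < x)%nat -> hit P m n x <= f x / f m.
Proof.
  revert x; induction n as [|n IH]; intros x Hx.
  - simpl; apply Rdiv_le_0_compat; [apply f_ge0 | exact f_m_pos].
  - assert (Hreach : forall z, (m <= z)%nat -> reach m n z <= f z / f m).
    { intros z Hz; unfold reach; destruct (Nat.eqb_spec z m) as [->|Hzm].
      - rewrite Rdiv_diag; lra.
      - apply IH; lia. }
    rewrite hit_succ.
    apply Rle_trans with
      ((down x * f (pred x) + (1 - up x - down x) * f x + up x * f (S x)) / f m).
    + pose proof (Hreach (pred x) ltac:(lia)); pose proof (Hreach x ltac:(lia));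
        pose proof (Hreach (S x) ltac:(lia)).
      pose proof (up_ge0 x); pose proof (down_ge0 x); pose proof (up_down_le1 x).
      unfold Rdiv in *; rewrite !Rmult_plus_distr_r, !Rmult_assoc.
      repeat apply Rplus_le_compat; apply Rmult_le_compat_l; lra.
    + apply Rmult_le_compat_r; [left; apply Rinv_0_lt_compat, f_m_pos |].
      apply f_superharmonic, Hx.
Qed.

Lemma transient_of_lyapunov : 0 < up m -> f (S m) < f m -> transient_state P m.
Proof.
  intros Hup Hdec.
  set (t := f (S m) / f m).
  assert (Ht : 0 <= t < 1).
  { split; [apply Rdiv_le_0_compat; [apply f_ge0 | exact f_m_pos] |].
    apply Rlt_div_l; [exact f_m_pos | lra]. }
  apply Rbar_le_lt_trans with (Finite (1 - up m * (1 - t))); [| simpl; nra].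
  unfold return_prob; rewrite <- (Lim_seq_const (1 - up m * (1 - t))).
  pose proof (up_ge0 m); pose proof (down_ge0 m); pose proof (up_down_le1 m).
  apply Lim_seq_le_loc; exists 0%nat; intros [|n] _.
  - simpl; nra.
  - rewrite hit_succ; unfold reach at 2; rewrite Nat.eqb_refl.
    assert (Hpred : reach m n (pred m) <= 1).
    { unfold reach; destruct (Nat.eqb (pred m) m); [lra | apply hit_bounds]. }
    assert (Hnext : reach m n (S m) <= t).
    { unfold reach; destruct (Nat.eqb_spec (S m) m); [lia | apply hit_le_lyapunov; lia]. }
    nra.
Qed.

End Lyapunov.

Lemma transient_of_decrements (rho f : nat -> R) (m : nat) :
  (forall x, 0 <= f x) -> (forall x, 0 < rho x) -> (forall x, f x = rho x + f (S x)) ->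
  (forall x, (m < x)%nat -> down x * rho (pred x) <= up x * rho x) ->
  0 < up m -> transient_state P m.
Proof.
  intros Hf Hrho Hstep Hdecr Hup.
  assert (Hdec : f (S m) < f m) by (rewrite (Hstep m); pose proof (Hrho m); lra).
  apply (transient_of_lyapunov m f Hf); [pose proof (Hf (S m)); lra | | exact Hup | exact Hdec].
  intros [|y] Hy; [lia|]; simpl pred.
  pose proof (Hdecr (S y) Hy) as H; simpl pred in H.
  rewrite (Hstep y), (Hstep (S y)) in *.
  lra.
Qed.

(* Below [K] any positive bound on [down / up] will do; the tail sums of the products of
   these bounds serve as the Lyapunov function. *)
Lemma transient_chain_of_periodic_drift (gp : nat -> R) (K : nat) :
  (forall x, (1 <= x)%nat -> 0 < up x) ->
  (forall r, 0 < gp r) -> gp 0%nat * gp 1%nat * gp 2%nat < 1 ->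
  (forall x, (K <= x)%nat -> down x <= up x * gp (x mod 3)) ->
  transient_chain P.
Proof.
  intros Hup Hgp Hprod Hdrift m Hm.
  set (g k := if (k <? K)%nat then (down k + 1) / up k else gp (k mod 3)).
  assert (Hg_pos : forall k, (1 <= k)%nat -> 0 < g k).
  { intros k Hk; unfold g; destruct (Nat.ltb k K); [| apply Hgp].
    apply Rdiv_lt_0_compat; [pose proof (down_ge0 k); lra | apply Hup, Hk]. }
  assert (Hg_per : forall k, (K <= k)%nat -> g k = gp (k mod 3)).
  { intros k Hk; unfold g; destruct (Nat.ltb_spec k K); [lia | reflexivity]. }
  assert (Hg_drift : forall x, (1 <= x)%nat -> down x <= up x * g x).
  { intros x Hx; unfold g; destruct (Nat.ltb_spec x K); [| apply Hdrift; lia].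
    pose proof (Hup x Hx).
    replace (up x * ((down x + 1) / up x)) with (down x + 1) by (field; lra); lra. }
  apply (transient_of_decrements (gprod g) (tail g gp K)).
  - intro x; left; apply tail_pos; assumption.
  - apply gprod_pos; assumption.
  - apply tail_step; assumption.
  - intros [|y] Hy; [lia|]; simpl.
    pose proof (Hg_drift (S y) ltac:(lia)); pose proof (gprod_pos g Hg_pos y).
    nra.
  - apply Hup, Hm.
Qed.

End BirthDeath.

Definition mix2 (s a c : R) : R := s * a + (1 - s) * c.

Definition accept (r w u : R) : R := Rmin 1 (r * (u / w)).

Definition mh_ratio (theta : R) (x y : nat) : R :=
  pi_t y * q_prop theta y x / (pi_t x * q_prop theta x y).

Lemma noisy_acc_mix2 theta b x y :
  noisy_acc theta b x y =
  mix2 (s_par b x)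
    (mix2 (s_par b y) (accept (mh_ratio theta x y) b b)
                      (accept (mh_ratio theta x y) b (eps y)))
    (mix2 (s_par b y) (accept (mh_ratio theta x y) (eps x) b)
                      (accept (mh_ratio theta x y) (eps x) (eps y))).
Proof. unfold noisy_acc, W_law, mix2, accept, mh_ratio; simpl; ring. Qed.

Section Mix2.

Variables (s a c : R).
Hypothesis s_range : 0 <= s <= 1.

Lemma mix2_bounds : 0 <= a <= 1 -> 0 <= c <= 1 -> 0 <= mix2 s a c <= 1.
Proof. unfold mix2; nra. Qed.

Lemma mix2_ge_l : 0 <= c -> s * a <= mix2 s a c.
Proof. unfold mix2; nra. Qed.

Lemma mix2_ge_r : 0 <= a -> (1 - s) * c <= mix2 s a c.
Proof. unfold mix2; nra. Qed.

Lemma mix2_le : a <= 1 -> 0 <= c -> mix2 s a c <= s + c.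
Proof. unfold mix2; nra. Qed.

End Mix2.

Lemma mix2_id s a : mix2 s a a = a.
Proof. unfold mix2; ring. Qed.

Lemma accept_bounds r w u : 0 <= r -> 0 < w -> 0 <= u -> 0 <= accept r w u <= 1.
Proof.
  intros Hr Hw Hu; unfold accept; split; [| apply Rmin_l].
  apply Rmin_glb; [lra | apply Rmult_le_pos, Rdiv_le_0_compat; assumption].
Qed.

Lemma accept_pos r w u : 0 < r -> 0 < w -> 0 < u -> 0 < accept r w u.
Proof.
  intros; unfold accept; apply Rmin_glb_lt; [lra|].
  apply Rmult_lt_0_compat; [| apply Rdiv_lt_0_compat]; assumption.
Qed.

Lemma mix2_accept_bounds s r w u1 u2 :
  0 <= s <= 1 -> 0 <= r -> 0 < w -> 0 <= u1 -> 0 <= u2 ->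
  0 <= mix2 s (accept r w u1) (accept r w u2) <= 1.
Proof. intros; apply mix2_bounds; [| apply accept_bounds..]; assumption. Qed.

Lemma accept_le r w u : accept r w u <= r * (u / w).
Proof. apply Rmin_r. Qed.

Lemma accept_eq1 r w u : 1 <= r * (u / w) -> accept r w u = 1.
Proof. apply Rmin_left. Qed.

Lemma Rdiv_le_cross a b c d : 0 < b -> 0 < d -> a * d <= c * b -> a / b <= c / d.
Proof.
  intros Hb Hd H.
  assert (E : c / d - a / b = (c * b - a * d) / (b * d)) by (field; lra).
  assert (0 <= (c * b - a * d) / (b * d)) by (apply Rdiv_le_0_compat; nra).
  lra.
Qed.

Lemma eps_pos x : (1 <= x)%nat -> 0 < eps x.
Proof. intro Hx; apply Rinv_0_lt_compat, pow_lt, lt_0_INR; lia. Qed.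

Lemma eps_le_inv x : (1 <= x)%nat -> eps x <= / INR x.
Proof.
  intro Hx; assert (1 <= INR x) by (apply (le_INR 1); exact Hx).
  apply Rinv_le_contravar; [lra|].
  rewrite <- (pow_1 (INR x)) at 1; apply Rle_pow; [lra|].
  pose proof (Nat.mod_upper_bound x 3); lia.
Qed.

Lemma eps_ratio_up x : (1 <= x)%nat -> (x mod 3 <> 2)%nat ->
  INR x / 4 <= eps (S x) / eps x.
Proof.
  intros Hx Hr; unfold eps; rewrite mod3_S, S_INR.
  assert (1 <= INR x) by (apply (le_INR 1); exact Hx).
  set (X := INR x) in *.
  pose proof (Nat.mod_upper_bound x 3 ltac:(lia)).
  destruct (x mod 3) as [|[|]]; try lia; simpl Nat.modulo; simpl Nat.sub.
  - replace (/ (X + 1) ^ 2 / / X ^ 3) with (X ^ 3 / (X + 1) ^ 2) by (field; lra).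
    apply Rdiv_le_cross; nra.
  - replace (/ (X + 1) ^ 1 / / X ^ 2) with (X ^ 2 / (X + 1)) by (field; lra).
    apply Rdiv_le_cross; nra.
Qed.

Lemma eps_ratio_down y : (1 <= y)%nat -> (S y mod 3 <> 0)%nat ->
  eps y / eps (S y) <= 8 / INR (S y).
Proof.
  intros Hy Hr; unfold eps; rewrite mod3_S in *; rewrite S_INR.
  assert (1 <= INR y) by (apply (le_INR 1); exact Hy).
  set (Y := INR y) in *.
  pose proof (Nat.mod_upper_bound y 3 ltac:(lia)).
  destruct (y mod 3) as [|[|[|]]]; try (simpl in Hr; lia); simpl Nat.modulo; simpl Nat.sub.
  - replace (/ Y ^ 3 / / (Y + 1) ^ 2) with ((Y + 1) ^ 2 / Y ^ 3) by (field; lra).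
    apply Rdiv_le_cross; nra.
  - replace (/ Y ^ 2 / / (Y + 1) ^ 1) with ((Y + 1) / Y ^ 2) by (field; lra).
    apply Rdiv_le_cross; nra.
Qed.

Lemma s_par_bounds b x : 1 < b -> (1 <= x)%nat -> 0 <= s_par b x <= / b.
Proof.
  intros Hb Hx; pose proof (eps_pos x Hx); pose proof (eps_le_inv x Hx).
  assert (/ INR x <= 1).
  { rewrite <- Rinv_1; apply Rinv_le_contravar; [lra | apply (le_INR 1); exact Hx]. }
  unfold s_par; split; [apply Rdiv_le_0_compat; lra|].
  rewrite <- (Rdiv_1_l b); apply Rdiv_le_cross; nra.
Qed.

Lemma s_par_ge b x : 1 < b -> (2 <= x)%nat -> / (2 * b) <= s_par b x.
Proof.
  intros Hb Hx; pose proof (eps_pos x ltac:(lia)); pose proof (eps_le_inv x ltac:(lia)).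
  assert (/ INR x <= / 2) by (apply Rinv_le_contravar; [lra | apply (le_INR 2); exact Hx]).
  unfold s_par; rewrite <- (Rdiv_1_l (2 * b)); apply Rdiv_le_cross; nra.
Qed.

Definition odds (theta : R) : R := (1 - theta) / theta.

Lemma odds_pos theta : 0 < theta < 1 -> 0 < odds theta.
Proof. intro; unfold odds; apply Rdiv_lt_0_compat; lra. Qed.

Lemma mh_ratio_up theta x : 0 < theta < 1 -> (1 <= x)%nat ->
  mh_ratio theta x (S x) = odds theta / 2.
Proof.
  intros Ht Hx; unfold mh_ratio, pi_t, q_prop, odds.
  destruct (Nat.leb_spec 1 (S x)), (Nat.leb_spec 1 x); try lia.
  destruct (Nat.eqb_spec x (S (S x))); [lia|]; rewrite !Nat.eqb_refl.
  assert ((1 / 2) ^ x <> 0) by (apply pow_nonzero; lra).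
  simpl; field; lra.
Qed.

Lemma mh_ratio_down theta y : 0 < theta < 1 -> (1 <= y)%nat ->
  mh_ratio theta (S y) y = 2 / odds theta.
Proof.
  intros Ht Hy; unfold mh_ratio, pi_t, q_prop, odds.
  destruct (Nat.leb_spec 1 (S y)), (Nat.leb_spec 1 y); try lia.
  destruct (Nat.eqb_spec y (S (S y))); [lia|]; rewrite !Nat.eqb_refl.
  assert ((1 / 2) ^ y <> 0) by (apply pow_nonzero; lra).
  simpl; field; lra.
Qed.

Lemma mh_ratio_1_0 theta : mh_ratio theta 1 0 = 0.
Proof. unfold mh_ratio, pi_t; simpl; unfold Rdiv; ring. Qed.

(* At large states [x = 0, 1, 2 (mod 3)] one has [up >= theta/2, theta/2, theta/(4b)] and
   [down <= 1 - theta, 3(1-theta)/b, 3(1-theta)/b]; the factors are the quotients. *)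
Definition drift_factor (theta b : R) (r : nat) : R :=
  match r with
  | O => 2 * odds theta
  | 1%nat => 6 * odds theta / b
  | _ => 12 * odds theta
  end.

Lemma drift_factor_pos theta b r : 0 < theta < 1 -> 0 < b -> 0 < drift_factor theta b r.
Proof.
  intros Ht Hb; pose proof (odds_pos theta Ht).
  destruct r as [|[|r]]; simpl; [lra | apply Rdiv_lt_0_compat | ]; lra.
Qed.

Lemma drift_factor_period theta b : 0 < b ->
  drift_factor theta b 0 * drift_factor theta b 1 * drift_factor theta b 2 =
  144 * odds theta ^ 3 / b.
Proof. intro Hb; simpl; field; lra. Qed.

Section NoisyChain.

Variables (theta b : R).
Hypothesis theta_range : 0 < theta < 1.
Hypothesis b_ge2 : 2 <= b.

(* Both vanish at the absorbing state 0, so that [Pnoisy] is a [bd_row] everywhere. *)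
Definition up_prob (x : nat) : R :=
  match x with O => 0 | _ => theta * noisy_acc theta b x (S x) end.

Definition down_prob (x : nat) : R :=
  match x with O => 0 | _ => (1 - theta) * noisy_acc theta b x (pred x) end.

Lemma up_prob_eq x : (1 <= x)%nat -> up_prob x = theta * noisy_acc theta b x (S x).
Proof. intro Hx; destruct x; [lia | reflexivity]. Qed.

Lemma down_prob_eq x : (1 <= x)%nat ->
  down_prob x = (1 - theta) * noisy_acc theta b x (pred x).
Proof. intro Hx; destruct x; [lia | reflexivity]. Qed.

Lemma Pnoisy_bd_row x z : Pnoisy theta b x z = bd_row (up_prob x) (down_prob x) x z.
Proof.
  unfold Pnoisy, bd_row, point_mass, up_prob, down_prob; destruct x as [|x]; simpl pred.
  - destruct z as [|[|z]]; simpl; ring.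
  - replace (Nat.eqb (S x) 0) with false by reflexivity.
    destruct (Nat.eqb_spec z (S (S x))), (Nat.eqb_spec (S z) (S x)),
      (Nat.eqb_spec z (S x)), (Nat.eqb_spec z x); subst; try lia; ring.
Qed.

Lemma s_par_range x : (1 <= x)%nat -> 0 <= s_par b x <= / 2.
Proof.
  intro Hx; pose proof (s_par_bounds b x ltac:(lra) Hx).
  assert (/ b <= / 2) by (apply Rinv_le_contravar; lra); lra.
Qed.

Lemma noisy_acc_bounds x y : (1 <= x)%nat -> (1 <= y)%nat -> 0 <= mh_ratio theta x y ->
  0 <= noisy_acc theta b x y <= 1.
Proof.
  intros Hx Hy Hr; rewrite noisy_acc_mix2.
  pose proof (s_par_range x Hx); pose proof (s_par_range y Hy).
  pose proof (eps_pos x Hx); pose proof (eps_pos y Hy).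
  apply mix2_bounds; [lra | |]; apply mix2_accept_bounds; lra.
Qed.

Lemma noisy_acc_1_0 : noisy_acc theta b 1 0 = 0.
Proof.
  rewrite noisy_acc_mix2, mh_ratio_1_0.
  unfold accept; rewrite !Rmult_0_l, Rmin_right by lra.
  unfold mix2; ring.
Qed.

Lemma up_prob_bounds x : 0 <= up_prob x <= theta.
Proof.
  destruct x as [|x]; [simpl; lra|]; rewrite up_prob_eq by lia.
  pose proof (mh_ratio_up theta (S x) theta_range ltac:(lia)).
  pose proof (odds_pos theta theta_range).
  pose proof (noisy_acc_bounds (S x) (S (S x)) ltac:(lia) ltac:(lia) ltac:(lra)).
  nra.
Qed.

Lemma down_prob_bounds x : 0 <= down_prob x <= 1 - theta.
Proof.
  destruct x as [|[|y]]; [simpl; lra | |]; rewrite down_prob_eq by lia; simpl pred.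
  - rewrite noisy_acc_1_0; lra.
  - pose proof (mh_ratio_down theta (S y) theta_range ltac:(lia)).
    pose proof (odds_pos theta theta_range).
    assert (0 <= 2 / odds theta) by (apply Rdiv_le_0_compat; lra).
    pose proof (noisy_acc_bounds (S (S y)) (S y) ltac:(lia) ltac:(lia) ltac:(lra)).
    nra.
Qed.

Lemma up_prob_pos x : (1 <= x)%nat -> 0 < up_prob x.
Proof.
  intro Hx; rewrite up_prob_eq by exact Hx.
  apply Rmult_lt_0_compat; [lra|].
  rewrite noisy_acc_mix2, mh_ratio_up by (lra || lia).
  pose proof (odds_pos theta theta_range).
  pose proof (s_par_range x Hx); pose proof (s_par_range (S x) ltac:(lia)).
  pose proof (s_par_ge b (S x) ltac:(lra) ltac:(lia)).
  pose proof (eps_pos x Hx); pose proof (eps_pos (S x) ltac:(lia)).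
  assert (0 < / (2 * b)) by (apply Rinv_0_lt_compat; lra).
  assert (0 < accept (odds theta / 2) (eps x) b) by (apply accept_pos; lra).
  eapply Rlt_le_trans; [| apply mix2_ge_r; [lra | apply mix2_accept_bounds; lra]].
  apply Rmult_lt_0_compat; [lra|].
  eapply Rlt_le_trans; [| apply mix2_ge_l; [lra | apply accept_bounds; lra]].
  apply Rmult_lt_0_compat; lra.
Qed.

Section LargeStates.

Variable x : nat.
Hypothesis x_large : 2 + 16 * b / odds theta <= INR x.

Lemma large_state_ge2 : (2 <= x)%nat.
Proof.
  pose proof (odds_pos theta theta_range).
  assert (0 <= 16 * b / odds theta) by (apply Rdiv_le_0_compat; lra).
  apply INR_le; simpl; lra.
Qed.

Lemma large_state_odds : 16 * b <= odds theta * INR x.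
Proof.
  pose proof (odds_pos theta theta_range).
  replace (16 * b) with (odds theta * (16 * b / odds theta)) by (field; lra).
  apply Rmult_le_compat_l; lra.
Qed.

Lemma accept_up_from_eps : accept (odds theta / 2) (eps x) b = 1.
Proof.
  pose proof large_state_ge2; pose proof large_state_odds.
  pose proof (odds_pos theta theta_range); pose proof (eps_pos x ltac:(lia)).
  pose proof (eps_le_inv x ltac:(lia)).
  assert (2 <= INR x) by (apply (le_INR 2); lia).
  assert (INR x <= / eps x).
  { rewrite <- (Rinv_inv (INR x)); apply Rinv_le_contravar; assumption. }
  assert (b * INR x <= b / eps x) by (apply Rmult_le_compat_l; lra).
  apply accept_eq1; nra.
Qed.

Lemma up_prob_ge : theta / (4 * b) <= up_prob x.
Proof.
  pose proof large_state_ge2; pose proof (odds_pos theta theta_range).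
  rewrite up_prob_eq, noisy_acc_mix2, mh_ratio_up, accept_up_from_eps by (lra || lia).
  pose proof (s_par_range x ltac:(lia)); pose proof (s_par_range (S x) ltac:(lia)).
  pose proof (s_par_ge b (S x) ltac:(lra) ltac:(lia)).
  pose proof (eps_pos x ltac:(lia)); pose proof (eps_pos (S x) ltac:(lia)).
  assert (0 < / (2 * b)) by (apply Rinv_0_lt_compat; lra).
  replace (theta / (4 * b)) with (theta * (/ 2 * / (2 * b))) by (field; lra).
  apply Rmult_le_compat_l; [lra|].
  eapply Rle_trans; [| apply mix2_ge_r; [lra | apply mix2_accept_bounds; lra]].
  apply Rmult_le_compat; [lra | lra | lra |].
  eapply Rle_trans; [| apply mix2_ge_l; [lra | apply accept_bounds; lra]].
  lra.
Qed.

Lemma up_prob_ge_half : (x mod 3 <> 2)%nat -> theta / 2 <= up_prob x.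
Proof.
  intro Hr; pose proof large_state_ge2; pose proof large_state_odds.
  pose proof (odds_pos theta theta_range); pose proof (eps_ratio_up x ltac:(lia) Hr).
  rewrite up_prob_eq, noisy_acc_mix2, mh_ratio_up, accept_up_from_eps by (lra || lia).
  rewrite (accept_eq1 _ (eps x) (eps (S x))), mix2_id by nra.
  pose proof (s_par_range x ltac:(lia)); pose proof (s_par_range (S x) ltac:(lia)).
  pose proof (eps_pos (S x) ltac:(lia)).
  eapply Rle_trans;
    [| apply Rmult_le_compat_l; [lra | apply mix2_ge_r; [lra | apply mix2_accept_bounds; lra]]].
  nra.
Qed.

Lemma down_prob_le : (x mod 3 <> 0)%nat -> down_prob x <= (1 - theta) * (3 / b).
Proof.
  intro Hr; pose proof large_state_ge2; pose proof large_state_odds.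
  pose proof (odds_pos theta theta_range).
  rewrite down_prob_eq by lia; apply Rmult_le_compat_l; [lra|].
  replace x with (S (pred x)) in * by lia; simpl pred in *; set (y := pred x) in *.
  rewrite noisy_acc_mix2, mh_ratio_down by (lra || lia).
  set (r := 2 / odds theta).
  assert (0 <= r) by (apply Rdiv_le_0_compat; lra).
  pose proof (s_par_bounds b (S y) ltac:(lra) ltac:(lia)).
  pose proof (s_par_bounds b y ltac:(lra) ltac:(lia)).
  pose proof (s_par_range (S y) ltac:(lia)); pose proof (s_par_range y ltac:(lia)).
  pose proof (eps_pos (S y) ltac:(lia)); pose proof (eps_pos y ltac:(lia)).
  assert (Hsmall : accept r (eps (S y)) (eps y) <= / b).
  { eapply Rle_trans; [apply accept_le|].
    eapply Rle_trans;
      [apply Rmult_le_compat_l; [lra | apply eps_ratio_down; [lia | exact Hr]] |].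
    unfold r; replace (2 / odds theta * (8 / INR (S y))) with (16 / (odds theta * INR (S y)))
      by (field; split; [apply not_0_INR | ]; lra || lia).
    rewrite <- (Rdiv_1_l b); apply Rdiv_le_cross; nra. }
  pose proof (mix2_accept_bounds (s_par b y) r b b (eps y) ltac:(lra) ltac:(lra) ltac:(lra)
    ltac:(lra) ltac:(lra)).
  pose proof (mix2_accept_bounds (s_par b y) r (eps (S y)) b (eps y) ltac:(lra) ltac:(lra)
    ltac:(lra) ltac:(lra) ltac:(lra)).
  eapply Rle_trans; [apply mix2_le; lra|].
  eapply Rle_trans; [apply Rplus_le_compat_l, mix2_le; [lra | apply accept_bounds; lra ..]|].
  unfold Rdiv; lra.
Qed.

Lemma down_le_up_drift : down_prob x <= up_prob x * drift_factor theta b (x mod 3).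
Proof.
  pose proof (odds_pos theta theta_range).
  assert (Hodds : 1 - theta = theta * odds theta) by (unfold odds; field; lra).
  pose proof (Nat.mod_upper_bound x 3 ltac:(lia)).
  destruct (x mod 3) as [|[|[|]]] eqn:Hr; try lia; simpl drift_factor.
  - pose proof (up_prob_ge_half ltac:(lia)); pose proof (down_prob_bounds x).
    nra.
  - pose proof (up_prob_ge_half ltac:(lia)); pose proof (down_prob_le ltac:(lia)).
    assert (0 <= 6 * odds theta / b) by (apply Rdiv_le_0_compat; lra).
    replace ((1 - theta) * (3 / b)) with (theta / 2 * (6 * odds theta / b)) in *
      by (unfold odds; field; lra).
    nra.
  - pose proof up_prob_ge; pose proof (down_prob_le ltac:(lia)).
    replace ((1 - theta) * (3 / b)) with (theta / (4 * b) * (12 * odds theta)) in *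
      by (unfold odds; field; lra).
    nra.
Qed.

End LargeStates.

End NoisyChain.

Theorem proposition2p3 :
  forall theta : R, 0 < theta < 1 ->
  exists b : R, 1 < b /\ transient_chain (Pnoisy theta b).
Proof.
  intros theta Htheta.
  pose proof (odds_pos theta Htheta) as Hodds.
  set (b := 3 + 144 * odds theta ^ 3).
  assert (Hb : 3 <= b) by (pose proof (pow_lt _ 3 Hodds); unfold b; lra).
  destruct (INR_archimed 1 (2 + 16 * b / odds theta) ltac:(lra)) as [K HK].
  exists b; split; [lra|].
  pose proof (up_prob_bounds theta b Htheta ltac:(lra)) as Hup.
  pose proof (down_prob_bounds theta b Htheta ltac:(lra)) as Hdown.
  apply (transient_chain_of_periodic_drift _ (up_prob theta b) (down_prob theta b))
    with (gp := drift_factor theta b) (K := K).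
  - apply Pnoisy_bd_row.
  - intro x; apply Hup.
  - intro x; apply Hdown.
  - intro x; pose proof (Hup x); pose proof (Hdown x); lra.
  - apply up_prob_pos; lra.
  - intro r; apply drift_factor_pos; lra.
  - rewrite drift_factor_period by lra; apply Rlt_div_l; [lra|].
    unfold b; generalize (odds theta ^ 3); intro; lra.
  - intros x Hx; apply down_le_up_drift; [lra | lra |].
    apply Rle_trans with (INR K); [lra | apply le_INR, Hx].
Qed.
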